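(* Let $n\ge 1$ and let $\Omega=\Omega_e\cup\Omega_o\subset\mathbb{Z}_2^n\setminus\{\mathbf 0\}$, where $\Omega_e$ and $\Omega_o$ are both nonempty, every tuple in $\Omega_e$ has even Hamming weight, and every tuple in $\Omega_o$ has odd Hamming weight. Then $\mathrm{NEPS}(P_3,\ldots,P_3;\Omega)$ (with $n$ factors) does not exhibit perfect state transfer between any pair of distinct vertices. *)

From mathcomp Require Import all_boot.
From Stdlib Require Import Reals Factorial.

Set Implicit Arguments.
Unset Strict Implicit.
Unset Printing Implicit Defensive.

Definition z2tuple (n : nat) := {ffun 'I_n -> bool}.

Definition hweight (n : nat) (b : z2tuple n) : nat := #|[set i | b i]|.

Definition z2zero (n : nat) : z2tuple n := [ffun _ => false].

Definition p3adj (i j : 'I_3) : bool := (i.+1 == j :> nat) || (j.+1 == i :> nat).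

Definition vertex (n : nat) := {ffun 'I_n -> 'I_3}.

Definition neps_adj (n : nat) (Om : {set z2tuple n}) (x y : vertex n) : bool :=
  [exists b in Om, [forall i, if b i then p3adj (x i) (y i) else x i == y i]].

Fixpoint adjpow (n : nat) (Om : {set z2tuple n}) (k : nat) (x y : vertex n) : nat :=
  match k with
  | 0 => nat_of_bool (x == y)
  | k'.+1 => \sum_(w : vertex n | neps_adj Om x w) adjpow Om k' w y
  end.

Local Open Scope R_scope.

(* Real and imaginary parts of U(t) = exp(i t A) = cos(tA) + i sin(tA),
   written as the power series of the matrix exponential (A is real). *)
Definition cos_term (n : nat) (Om : {set z2tuple n}) (t : R) (x y : vertex n) (k : nat) : R :=
  (-1) ^ k * t ^ (2 * k)%nat / INR (fact (2 * k)) * INR (adjpow Om (2 * k) x y).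

Definition sin_term (n : nat) (Om : {set z2tuple n}) (t : R) (x y : vertex n) (k : nat) : R :=
  (-1) ^ k * t ^ (2 * k + 1)%nat / INR (fact (2 * k + 1)) * INR (adjpow Om (2 * k + 1) x y).

Definition pst (n : nat) (Om : {set z2tuple n}) (x y : vertex n) : Prop :=
  exists t c s : R,
    0 < t /\ infinite_sum (cos_term Om t x y) c /\
    infinite_sum (sin_term Om t x y) s /\ c ^ 2 + s ^ 2 = 1.

From Pilot Require Import Defs.
From HB Require Import structures.
From mathcomp Require Import all_boot.
From Stdlib Require Import Reals Factorial Lra Lia.

(* The normalized eigenvectors of P_3 (eigenvalues sqrt 2, 0, -sqrt 2) tensor
   to an orthonormal eigenbasis [Phi j] of the NEPS, whose eigenvalue [lam j]
   sums, over beta in Omega, the products of the factor eigenvalues on the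
   support of beta.  Hence U(t)_{xy} = sum_j w_j e^{i t lam j} with
   w_j = Phi j x * Phi j y and sum_j |w_j| <= 1, so |U(t)_{xy}| = 1 forces the
   phases t * lam j with w_j <> 0 to agree modulo pi.  For a nonzero beta in
   Omega, a signed sum of the eigenvalues of the 2^n tensor products of the
   +-sqrt 2 eigenvectors isolates the beta-term and equals
   2^n * sqrt 2 ^ |beta|, so t * 2^n * sqrt 2 ^ |beta| / pi is an integer.
   A beta of even weight makes t / pi rational, one of odd weight makes
   t * sqrt 2 / pi rational: both cannot hold since sqrt 2 is irrational. *)

Set Implicit Arguments.
Unset Strict Implicit.
Unset Printing Implicit Defensive.

Open Scope R_scope.

HB.instance Definition _ := Monoid.isComLaw.Build R 0 Rplus
  (fun x y z => esym (Rplus_assoc x y z)) Rplus_comm Rplus_0_l.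
HB.instance Definition _ := Monoid.isComLaw.Build R 1 Rmult
  (fun x y z => esym (Rmult_assoc x y z)) Rmult_comm Rmult_1_l.
HB.instance Definition _ := Monoid.isMulLaw.Build R 0 Rmult Rmult_0_l Rmult_0_r.
HB.instance Definition _ :=
  Monoid.isAddLaw.Build R Rmult Rplus Rmult_plus_distr_r Rmult_plus_distr_l.

(* The generic distributivity lemmas leave the monoid-law projections in place
   of [Rplus] and [Rmult], which [ring] does not recognize; these restatements
   fix the operators. *)
Lemma mulR_suml (I : Type) (r : seq I) (P : pred I) (F : I -> R) a :
  \big[Rplus/0]_(i <- r | P i) F i * a = \big[Rplus/0]_(i <- r | P i) (F i * a).
Proof. exact: big_distrl. Qed.

Lemma mulR_sumr (I : Type) (r : seq I) (P : pred I) (F : I -> R) a :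
  a * \big[Rplus/0]_(i <- r | P i) F i = \big[Rplus/0]_(i <- r | P i) (a * F i).
Proof. exact: big_distrr. Qed.

Lemma prodR_sum_ffun (I J : finType) (F : I -> J -> R) :
  \big[Rmult/1]_i \big[Rplus/0]_j F i j
    = \big[Rplus/0]_(f : {ffun I -> J}) \big[Rmult/1]_i F i (f i).
Proof. exact: bigA_distr_bigA. Qed.

Lemma sumR_ge0 (I : Type) (r : seq I) (P : pred I) (F : I -> R) :
  (forall i, P i -> 0 <= F i) -> 0 <= \big[Rplus/0]_(i <- r | P i) F i.
Proof. exact: (big_ind (fun x => 0 <= x) (Rle_refl 0) Rplus_le_le_0_compat). Qed.

Lemma prodR_neq0 (I : Type) (r : seq I) (P : pred I) (F : I -> R) :
  (forall i, P i -> F i <> 0) -> \big[Rmult/1]_(i <- r | P i) F i <> 0.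
Proof.
exact: (big_ind (fun x => x <> 0) R1_neq_R0 Rmult_integral_contrapositive_currified).
Qed.

Lemma prodR_in01 (I : Type) (r : seq I) (P : pred I) (F : I -> R) :
  (forall i, P i -> 0 <= F i <= 1) -> 0 <= \big[Rmult/1]_(i <- r | P i) F i <= 1.
Proof. by apply: (big_ind (fun x => 0 <= x <= 1)) => [|x y]; nra. Qed.

Lemma sumR_ge0_eq0 (I : finType) (F : I -> R) :
  (forall i, 0 <= F i) -> \big[Rplus/0]_i F i <= 0 -> forall i, F i = 0.
Proof.
move=> F_ge0 sum_le0 i; rewrite (bigD1 i) //= in sum_le0.
have := @sumR_ge0 _ (index_enum I) (fun j => j != i) F (fun j _ => F_ge0 j).
have := F_ge0 i; lra.
Qed.

Lemma prodR_if0 (I : finType) (C : pred I) (F : I -> R) :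
  \big[Rmult/1]_i (if C i then F i else 0) =
  if [forall i, C i] then \big[Rmult/1]_i F i else 0.
Proof.
have [/forallP allC | /forallPn [i notCi]] := boolP [forall i, C i].
  by apply: eq_bigr => i _; rewrite allC.
by rewrite (bigD1 i) //= (negbTE notCi) Rmult_0_l.
Qed.

Lemma sum_bool_ffun_prodR (J : finType) (F : J -> bool -> R) :
  \big[Rplus/0]_(s : {ffun J -> bool}) \big[Rmult/1]_j F j (s j) =
  \big[Rmult/1]_j (F j true + F j false).
Proof. by rewrite -prodR_sum_ffun; apply: eq_bigr => j _; rewrite big_bool. Qed.

Lemma INR_sum (I : finType) (P : pred I) (f : I -> nat) :
  INR (\sum_(i | P i) f i) = \big[Rplus/0]_(i | P i) INR (f i).
Proof. exact: (big_morph INR plus_INR (erefl (INR 0))). Qed.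

Lemma infinite_sum_ext (f g : nat -> R) l :
  (forall k, f k = g k) -> infinite_sum f l -> infinite_sum g l.
Proof. by move=> fg; apply: Un_cv_ext => N; apply: sum_eq => k _. Qed.

Lemma infinite_sum_plus (f g : nat -> R) a b :
  infinite_sum f a -> infinite_sum g b -> infinite_sum (fun k => f k + g k) (a + b).
Proof.
move=> fa gb; apply: (Un_cv_ext (fun N => sum_f_R0 f N + sum_f_R0 g N)).
  by move=> N; rewrite sum_plus.
exact: CV_plus.
Qed.

Lemma infinite_sum_scal (f : nat -> R) a c :
  infinite_sum f a -> infinite_sum (fun k => c * f k) (c * a).
Proof.
move=> fa; apply: (Un_cv_ext (fun N => c * sum_f_R0 f N)).
  by move=> N; rewrite scal_sum; apply: sum_eq => k _; ring.
apply: CV_mult fa => eps eps_gt0; exists 0%nat => N _.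
by rewrite /R_dist Rminus_diag Rabs_R0.
Qed.

Lemma infinite_sum_big (I : Type) (r : seq I) (P : pred I) (f : I -> nat -> R) (l : I -> R) :
  (forall i, infinite_sum (f i) (l i)) ->
  infinite_sum (fun k => \big[Rplus/0]_(i <- r | P i) f i k)
               (\big[Rplus/0]_(i <- r | P i) l i).
Proof.
move=> fl; elim: r => [|i r IHr].
  rewrite big_nil; apply: (infinite_sum_ext (f := fun _ => 0)) => [k|eps eps_gt0].
    by rewrite big_nil.
  by exists 0%nat => N _; rewrite sum_cte Rmult_0_l /R_dist Rminus_diag Rabs_R0.
rewrite big_cons; case: ifP => Pi.
  by apply: infinite_sum_ext (infinite_sum_plus (fl i) IHr) => k; rewrite big_cons Pi.
by apply: infinite_sum_ext IHr => k; rewrite big_cons Pi.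
Qed.

Lemma cos_series a :
  infinite_sum (fun k => (-1) ^ k * a ^ (2 * k) / INR (fact (2 * k))) (cos a).
Proof.
rewrite /cos; case: (exist_cos (Rsqr a)) => l cos_l.
apply: infinite_sum_ext cos_l => k.
change (2 * k)%nat with (Nat.mul 2 k).
by rewrite /cos_n /Rsqr pow_mult /= Rmult_1_r; field; apply: INR_fact_neq_0.
Qed.

Lemma sin_series a :
  infinite_sum (fun k => (-1) ^ k * a ^ (2 * k + 1) / INR (fact (2 * k + 1))) (sin a).
Proof.
rewrite /sin; case: (exist_sin (Rsqr a)) => l sin_l.
apply: infinite_sum_ext (infinite_sum_scal a sin_l) => k.
change (2 * k + 1)%nat with (Nat.add (Nat.mul 2 k) 1).
by rewrite /sin_n /Rsqr pow_add pow_mult /= !Rmult_1_r; field; apply: INR_fact_neq_0.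
Qed.

Lemma sqrt2_sqr : sqrt 2 * sqrt 2 = 2.
Proof. by apply: sqrt_sqrt; lra. Qed.

Definition o0 : 'I_3 := @Ordinal 3 0 isT.
Definition o1 : 'I_3 := @Ordinal 3 1 isT.
Definition o2 : 'I_3 := @Ordinal 3 2 isT.

Lemma I3P (a : 'I_3) : a = o0 \/ a = o1 \/ a = o2.
Proof. by case: a => [[|[|[|//]]] ?]; [left | right; left | right; right]; apply: val_inj. Qed.

Lemma sum_I3 (F : 'I_3 -> R) : \big[Rplus/0]_(a : 'I_3) F a = F o0 + F o1 + F o2.
Proof.
rewrite !big_ord_recl big_ord0 Rplus_0_r Rplus_assoc.
by congr (F _ + (F _ + F _)); apply: val_inj.
Qed.

Lemma p3adj_neq (p c : 'I_3) : p3adj p c -> p != c.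
Proof. by case: (I3P p) => [|[|]] ->; case: (I3P c) => [|[|]] ->. Qed.

(* Row [a] is the normalized eigenvector of P_3 for the eigenvalue [p3_eig a]. *)
Definition p3_vec (a p : 'I_3) : R :=
  match nat_of_ord a, nat_of_ord p with
  | 1, 0 => sqrt 2 / 2 | 1, 1 => 0 | 1, _ => - (sqrt 2 / 2)
  | 0, 1 => sqrt 2 / 2 | _, 1 => - (sqrt 2 / 2)
  | _, _ => /2
  end.

Definition p3_eig (a : 'I_3) : R :=
  match nat_of_ord a with 0 => sqrt 2 | 1 => 0 | _ => - sqrt 2 end.

(* [p3_mx b] is A^b for b in {0, 1}, A the adjacency matrix of P_3: the NEPS
   adjacency matrix is the sum over beta in Omega of the tensor products of the
   [p3_mx (beta i)]. *)
Definition p3_mx (b : bool) (p c : 'I_3) : R :=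
  if (if b then p3adj p c else p == c) then 1 else 0.

Lemma p3_vec_complete (p q : 'I_3) :
  \big[Rplus/0]_a (p3_vec a p * p3_vec a q) = if p == q then 1 else 0.
Proof.
rewrite sum_I3; have := sqrt2_sqr.
by case: (I3P p) => [|[|]] ->; case: (I3P q) => [|[|]] ->; rewrite /p3_vec /=; nra.
Qed.

Lemma p3_mx_eigen (b : bool) (a p : 'I_3) :
  \big[Rplus/0]_c (p3_mx b p c * p3_vec a c) = (if b then p3_eig a else 1) * p3_vec a p.
Proof.
rewrite sum_I3; have := sqrt2_sqr.
by case: (I3P a) => [|[|]] ->; case: (I3P p) => [|[|]] ->; case: b;
  rewrite /p3_mx /p3_vec /p3_eig /p3adj /=; nra.
Qed.

Lemma p3_vec_neq0 (a p : 'I_3) : a != o1 -> p3_vec a p <> 0.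
Proof.
have := Rlt_sqrt2_0.
by case: (I3P a) => [|[|]] ->; case: (I3P p) => [|[|]] ->;
  rewrite /p3_vec /= => sqrt2_gt0 // _; lra.
Qed.

Lemma p3_vec_abs_le1 (p q : 'I_3) :
  \big[Rplus/0]_a Rabs (p3_vec a p * p3_vec a q) <= 1.
Proof.
have am_gm (u v : R) : Rabs (u * v) <= (u * u + v * v) / 2.
  have := Rle_0_sqr (u - v); have := Rle_0_sqr (u + v); rewrite /Rsqr /Rabs.
  by case: Rcase_abs => _; lra.
have := p3_vec_complete p p; have := p3_vec_complete q q; rewrite !eqxx !sum_I3.
have := am_gm (p3_vec o0 p) (p3_vec o0 q); have := am_gm (p3_vec o1 p) (p3_vec o1 q).
have := am_gm (p3_vec o2 p) (p3_vec o2 q); lra.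
Qed.

Section NepsSpectrum.
Variables (n : nat) (Om : {set z2tuple n}).

Definition Phi (j x : vertex n) : R := \big[Rmult/1]_i p3_vec (j i) (x i).

Definition lam (j : vertex n) : R :=
  \big[Rplus/0]_(b in Om) \big[Rmult/1]_i (if b i then p3_eig (j i) else 1).

Definition neps_mx (x w : vertex n) : R :=
  \big[Rplus/0]_(b in Om) \big[Rmult/1]_i p3_mx (b i) (x i) (w i).

Lemma neps_adj_support (b : z2tuple n) (x w : vertex n) i :
  (if b i then p3adj (x i) (w i) else x i == w i) -> b i = (x i != w i).
Proof. by case: (b i) => [/p3adj_neq -> | ->]. Qed.

Lemma neps_mxE (x w : vertex n) : neps_mx x w = if neps_adj Om x w then 1 else 0.
Proof.
have prod_p3_mx (b : z2tuple n) : \big[Rmult/1]_i p3_mx (b i) (x i) (w i) =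
    if [forall i, if b i then p3adj (x i) (w i) else x i == w i] then 1 else 0.
  by rewrite /p3_mx prodR_if0; case: ifP => // _; apply: big1.
rewrite /neps_mx /neps_adj; case: existsP => [[b0 /andP [b0_in xw_b0]] | no_b].
  rewrite (bigD1 b0) //= prod_p3_mx xw_b0 big1 ?Rplus_0_r // => b /andP [_ b_neq].
  rewrite prod_p3_mx; case: ifP => // /forallP xw_b; case/eqP: b_neq.
  apply/ffunP => i; move/forallP: xw_b0 => xw_b0.
  by rewrite (neps_adj_support (xw_b i)) (neps_adj_support (xw_b0 i)).
rewrite big1 // => b b_in; rewrite prod_p3_mx; case: ifP => // xw_b.
by case: no_b; exists b; rewrite b_in.
Qed.

Lemma Phi_complete (x y : vertex n) :
  \big[Rplus/0]_j (Phi j x * Phi j y) = if x == y then 1 else 0.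
Proof.
under eq_bigr do rewrite /Phi -big_split.
rewrite -(prodR_sum_ffun (fun i a => p3_vec a (x i) * p3_vec a (y i))) /=.
under eq_bigr do rewrite p3_vec_complete.
rewrite prodR_if0 big1 //; congr (if _ then _ else _).
by apply/forallP/eqP => [xy_eq | -> i //]; apply/ffunP => i; apply/eqP.
Qed.

Lemma neps_mx_eigen (j x : vertex n) :
  \big[Rplus/0]_w (neps_mx x w * Phi j w) = lam j * Phi j x.
Proof.
under eq_bigr do rewrite /neps_mx mulR_suml.
rewrite exchange_big /lam mulR_suml; apply: eq_bigr => b _.
under eq_bigr => w _ do rewrite /Phi -big_split.
rewrite -(prodR_sum_ffun (fun i c => p3_mx (b i) (x i) c * p3_vec (j i) c)) /=.
under eq_bigr do rewrite p3_mx_eigen.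
by rewrite big_split.
Qed.

Lemma adjpow_spectral k (x y : vertex n) :
  INR (adjpow Om k x y) = \big[Rplus/0]_j (lam j ^ k * (Phi j x * Phi j y)).
Proof.
elim: k x => [|k IHk] x /=.
  under eq_bigr do rewrite Rmult_1_l.
  by rewrite Phi_complete; case: (x == y).
rewrite INR_sum big_mkcond /=.
transitivity (\big[Rplus/0]_w (neps_mx x w * INR (adjpow Om k w y))).
  by apply: eq_bigr => w _; rewrite neps_mxE; case: ifP => _; ring.
under eq_bigr do rewrite IHk mulR_sumr.
rewrite exchange_big; apply: eq_bigr => j _.
transitivity (lam j ^ k * Phi j y * \big[Rplus/0]_w (neps_mx x w * Phi j w)).
  by rewrite mulR_sumr; apply: eq_bigr => w _; ring.
rewrite neps_mx_eigen /=; ring.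
Qed.

Lemma Phi_weight_le1 (x y : vertex n) :
  \big[Rplus/0]_j Rabs (Phi j x * Phi j y) <= 1.
Proof.
pose F i a := Rabs (p3_vec a (x i) * p3_vec a (y i)).
have -> : \big[Rplus/0]_j Rabs (Phi j x * Phi j y) = \big[Rmult/1]_i \big[Rplus/0]_a F i a.
  rewrite prodR_sum_ffun; apply: eq_bigr => j _.
  by rewrite /Phi -big_split (big_morph Rabs Rabs_mult Rabs_R1).
suff [] : 0 <= \big[Rmult/1]_i \big[Rplus/0]_a F i a <= 1 by [].
apply: prodR_in01 => i _; split; last exact: p3_vec_abs_le1.
by apply: sumR_ge0 => a _; apply: Rabs_pos.
Qed.

Lemma cos_term_sum t (x y : vertex n) :
  infinite_sum (Defs.cos_term Om t x y)
    (\big[Rplus/0]_j (Phi j x * Phi j y * cos (t * lam j))).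
Proof.
apply: infinite_sum_ext (infinite_sum_big _ _ (fun j => infinite_sum_scal _ (cos_series _))) => k.
rewrite /Defs.cos_term adjpow_spectral mulR_sumr; apply: eq_bigr => j _.
by rewrite Rpow_mult_distr /Rdiv; ring.
Qed.

Lemma sin_term_sum t (x y : vertex n) :
  infinite_sum (Defs.sin_term Om t x y)
    (\big[Rplus/0]_j (Phi j x * Phi j y * sin (t * lam j))).
Proof.
apply: infinite_sum_ext (infinite_sum_big _ _ (fun j => infinite_sum_scal _ (sin_series _))) => k.
rewrite /Defs.sin_term adjpow_spectral mulR_sumr; apply: eq_bigr => j _.
by rewrite Rpow_mult_distr /Rdiv; ring.
Qed.

End NepsSpectrum.

Lemma sin_eq0_of_abs_cos (a th : R) : a <> 0 -> Rabs a = a * cos th -> sin th = 0.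
Proof.
move=> a_neq0 abs_a.
have abs_cos1 : Rabs (cos th) = 1.
  have a_gt0 := Rabs_pos_lt a a_neq0.
  have := f_equal Rabs abs_a; rewrite Rabs_mult Rabs_Rabsolu; nra.
have := sin2_cos2 th; rewrite [Rsqr (cos th)]Rsqr_abs abs_cos1 /Rsqr => sin2.
by apply: Rsqr_0_uniq; rewrite /Rsqr; lra.
Qed.

Lemma unimodular_sum_phases (J : finType) (w th : J -> R) :
  \big[Rplus/0]_j Rabs (w j) <= 1 ->
  (\big[Rplus/0]_j (w j * cos (th j))) ^ 2 + (\big[Rplus/0]_j (w j * sin (th j))) ^ 2 = 1 ->
  forall j k, w j <> 0 -> w k <> 0 -> sin (th j - th k) = 0.
Proof.
set W := \big[Rplus/0]_j Rabs (w j).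
set c := \big[Rplus/0]_j (w j * cos (th j)).
set s := \big[Rplus/0]_j (w j * sin (th j)).
move=> W_le1 cs_eq1 j k wj_neq0 wk_neq0.
pose D j k := Rabs (w j) * Rabs (w k) - w j * w k * cos (th j - th k).
have D_ge0 j' k' : 0 <= D j' k'.
  have := Rle_abs (w j' * w k' * cos (th j' - th k')).
  have cos_le1 : Rabs (cos (th j' - th k')) <= 1 by apply: Rabs_le; apply: COS_bound.
  have := Rmult_le_compat_l _ _ _ (Rmult_le_pos _ _ (Rabs_pos (w j')) (Rabs_pos (w k'))) cos_le1.
  by rewrite !Rabs_mult /D; lra.
(* (sum_j |w_j|)^2 - |sum_j w_j e^{i th_j}|^2 = sum_{j,k} D j k *)
have lagrange : W * W = c * c + s * s + \big[Rplus/0]_j' \big[Rplus/0]_k' D j' k'.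
  rewrite /W /c /s !mulR_suml -!big_split /=; apply: eq_bigr => j' _.
  rewrite !mulR_sumr -!big_split /=; apply: eq_bigr => k' _.
  by rewrite /D cos_minus; ring.
have W_ge0 : 0 <= W by apply: sumR_ge0 => j' _; apply: Rabs_pos.
have sumD_le0 : \big[Rplus/0]_j' \big[Rplus/0]_k' D j' k' <= 0 by nra.
have Dj_eq0 := sumR_ge0_eq0 (fun j' => sumR_ge0 _ (fun k' _ => D_ge0 j' k')) sumD_le0 j.
have Djk_eq0 := sumR_ge0_eq0 (fun k' => D_ge0 j k') (Req_le _ _ Dj_eq0) k.
apply: (sin_eq0_of_abs_cos (Rmult_integral_contrapositive_currified _ _ wj_neq0 wk_neq0)).
by rewrite Rabs_mult; rewrite /D in Djk_eq0; lra.
Qed.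

Lemma iter_Rmult (a : R) m : iter m (Rmult a) 1 = a ^ m.
Proof. by elim: m => //= m ->. Qed.

Lemma prod_hweight n (b : z2tuple n) :
  \big[Rmult/1]_i (if b i then 2 * sqrt 2 else 2) = 2 ^ n * sqrt 2 ^ hweight b.
Proof.
transitivity (\big[Rmult/1]_(i < n) 2 * \big[Rmult/1]_(i < n) (if b i then sqrt 2 else 1)).
  by rewrite -big_split; apply: eq_bigr => i _ /=; case: (b i); ring.
rewrite big_const_ord iter_Rmult -big_mkcond big_const iter_Rmult /hweight.
by congr (_ * sqrt 2 ^ _); apply: eq_card => i; rewrite inE.
Qed.

Section SignedEigenvalueSum.
Variables (n : nat) (Om : {set z2tuple n}) (b0 : z2tuple n).

Definition pm_eigvec (s : z2tuple n) : vertex n := [ffun i => if s i then o0 else o2].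

Definition pm_sign (s : z2tuple n) : R :=
  \big[Rmult/1]_i (if b0 i then (if s i then 1 else -1) else 1).

Lemma sum_pm_sign : (exists i, b0 i) -> \big[Rplus/0]_(s : z2tuple n) pm_sign s = 0.
Proof.
case=> i b0_i; rewrite /pm_sign.
rewrite (sum_bool_ffun_prodR (fun i b => if b0 i then (if b then 1 else -1) else 1)).
by rewrite (bigD1 i) //= b0_i Rplus_opp_r Rmult_0_l.
Qed.

(* The signs annihilate, factor by factor, every beta-term of [lam] but the b0-term. *)
Lemma sum_pm_sign_term (b : z2tuple n) :
  \big[Rplus/0]_(s : z2tuple n)
     (pm_sign s * \big[Rmult/1]_i (if b i then p3_eig (pm_eigvec s i) else 1))
  = if b == b0 then 2 ^ n * sqrt 2 ^ hweight b0 else 0.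
Proof.
pose G i (c : bool) := (if b0 i then (if c then 1 else -1) else 1) *
                       (if b i then p3_eig (if c then o0 else o2) else 1).
have G_sum i :
    G i true + G i false = if b i == b0 i then (if b0 i then 2 * sqrt 2 else 2) else 0.
  by rewrite /G; case: (b i); case: (b0 i); rewrite /p3_eig /=; lra.
transitivity (\big[Rplus/0]_(s : z2tuple n) \big[Rmult/1]_i G i (s i)).
  apply: eq_bigr => s _; rewrite /pm_sign -big_split /=.
  by apply: eq_bigr => i _; rewrite /G ffunE.
rewrite sum_bool_ffun_prodR; under eq_bigr do rewrite G_sum.
rewrite prodR_if0 prod_hweight; congr (if _ then _ else _).
by apply/forallP/eqP => [b_eq | -> i //]; apply/ffunP => i; apply/eqP.
Qed.

Lemma sum_pm_sign_lam : b0 \in Om ->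
  \big[Rplus/0]_(s : z2tuple n) (pm_sign s * lam Om (pm_eigvec s))
  = 2 ^ n * sqrt 2 ^ hweight b0.
Proof.
move=> b0_in; rewrite /lam; under eq_bigr do rewrite mulR_sumr.
rewrite exchange_big /=; under eq_bigr do rewrite sum_pm_sign_term.
by rewrite (bigD1 b0) //= eqxx big1 ?Rplus_0_r // => b /andP [_ /negbTE ->].
Qed.

End SignedEigenvalueSum.

Lemma Phi_pm_eigvec_neq0 n (s : z2tuple n) (x : vertex n) : Phi (pm_eigvec s) x <> 0.
Proof. by apply: prodR_neq0 => i _; apply: p3_vec_neq0; rewrite ffunE; case: (s i). Qed.

Lemma z2tuple_neq0 n (b : z2tuple n) : b != z2zero n -> exists i, b i.
Proof.
move=> b_neq0; apply/existsP; apply: contraR b_neq0 => /existsPn b_eq0.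
by apply/eqP/ffunP => i; rewrite ffunE; apply/negbTE.
Qed.

Definition is_int (r : R) := exists z : Z, r = IZR z.

Lemma is_int_mul a b : is_int a -> is_int b -> is_int (a * b).
Proof. by move=> [za ->] [zb ->]; exists (za * zb)%Z; rewrite mult_IZR. Qed.

Lemma is_int_sum (I : Type) (r : seq I) (P : pred I) (F : I -> R) :
  (forall i, P i -> is_int (F i)) -> is_int (\big[Rplus/0]_(i <- r | P i) F i).
Proof.
apply: big_ind; first by exists 0%Z.
by move=> a b [za ->] [zb ->]; exists (za + zb)%Z; rewrite plus_IZR.
Qed.

Lemma is_int_pow2 k : is_int (2 ^ k).
Proof. by elim: k => [|k IHk] /=; [exists 1%Z | apply: is_int_mul IHk; exists 2%Z]. Qed.

Lemma is_int_pm_sign n (b0 s : z2tuple n) : is_int (pm_sign b0 s).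
Proof.
apply: big_ind => [|a b|i _]; [by exists 1%Z | exact: is_int_mul |].
by case: (b0 i) (s i) => [[]|_]; [exists 1%Z | exists (-1)%Z | exists 1%Z].
Qed.

Lemma phase_lock_int n (Om : {set z2tuple n}) (x y : vertex n) t (b0 : z2tuple n) :
  b0 \in Om -> b0 != z2zero n ->
  (forall j k, Phi j x * Phi j y <> 0 -> Phi k x * Phi k y <> 0 ->
     sin (t * lam Om j - t * lam Om k) = 0) ->
  is_int (t * (2 ^ n * sqrt 2 ^ hweight b0) / PI).
Proof.
move=> b0_in b0_neq0 locked.
pose s1 : z2tuple n := [ffun=> true].
pose gap s := (t * lam Om (pm_eigvec s) - t * lam Om (pm_eigvec s1)) / PI.
have PI_neq0 : PI <> 0 by have := PI_RGT_0; lra.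
have gap_int s : is_int (gap s).
  have weight_neq0 s' : Phi (pm_eigvec s') x * Phi (pm_eigvec s') y <> 0.
    by apply: Rmult_integral_contrapositive_currified; apply: Phi_pm_eigvec_neq0.
  have [k k_eq] := sin_eq_0_0 _ (locked _ _ (weight_neq0 s) (weight_neq0 s1)).
  by exists k; rewrite /gap k_eq; field.
have -> : t * (2 ^ n * sqrt 2 ^ hweight b0) / PI
          = \big[Rplus/0]_(s : z2tuple n) (pm_sign b0 s * gap s).
  transitivity (\big[Rplus/0]_(s : z2tuple n) (pm_sign b0 s * lam Om (pm_eigvec s)) * (t / PI)
    + \big[Rplus/0]_(s : z2tuple n) pm_sign b0 s * - (t * lam Om (pm_eigvec s1) / PI)).
    by rewrite sum_pm_sign_lam // (sum_pm_sign (z2tuple_neq0 b0_neq0)); field.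
  rewrite !mulR_suml -big_split /=.
  by apply: eq_bigr => s _; rewrite /gap /Rdiv; ring.
by apply: is_int_sum => s _; apply: is_int_mul; [apply: is_int_pm_sign | apply: gap_int].
Qed.

Lemma sqrt2_pow k : sqrt 2 ^ k = 2 ^ k./2 * (if odd k then sqrt 2 else 1).
Proof.
rewrite -{1}(odd_double_half k) pow_add.
have -> : sqrt 2 ^ (k./2).*2 = 2 ^ k./2.
  by rewrite -addnn pow_add -Rpow_mult_distr sqrt2_sqr.
by case: (odd k) => /=; ring.
Qed.

Lemma sqrt2_irrational (a b : Z) : b <> 0%Z -> IZR a <> IZR b * sqrt 2.
Proof.
move=> b_neq0 ab_eq.
have /eq_IZR sq_eq : IZR (a * a) = IZR (b * b * 2).
  rewrite !mult_IZR ab_eq.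
  by transitivity (IZR b * IZR b * (sqrt 2 * sqrt 2)); [ring | rewrite sqrt2_sqr].
pose a' := Z.abs_nat a; pose b' := Z.abs_nat b.
have sq_nat : (a' * a' = b' * b' * 2)%nat.
  by move/(f_equal Z.abs_nat): sq_eq; rewrite !Znat.Zabs2Nat.inj_mul.
have b'_gt0 : (0 < b')%nat by rewrite lt0n; apply/eqP; lia.
have a'_gt0 : (0 < a')%nat.
  have : (0 < a' * a')%nat by rewrite sq_nat !muln_gt0 b'_gt0.
  by rewrite muln_gt0 andbb.
(* the 2-adic valuation is even on the left and odd on the right *)
move/(f_equal (logn 2)): sq_nat.
rewrite !lognM ?muln_gt0 ?a'_gt0 ?b'_gt0 // (@logn_prime 2 2) //=.
by move/(f_equal odd); rewrite !oddD !addbb.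
Qed.

Lemma int_multiples_sqrt2 t a b : 0 < t -> 0 < a -> 0 < b -> is_int a -> is_int b ->
  is_int (t * a / PI) -> ~ is_int (t * (b * sqrt 2) / PI).
Proof.
move=> t_gt0 a_gt0 b_gt0 [za a_eq] [zb b_eq] [ka ka_eq] [kb kb_eq].
have PI_gt0 := PI_RGT_0.
have ka_gt0 : 0 < IZR ka by rewrite -ka_eq; apply: Rdiv_lt_0_compat => //; nra.
apply: (@sqrt2_irrational (kb * za) (ka * zb)).
  by move/(f_equal IZR); rewrite mult_IZR -b_eq /=; nra.
by rewrite !mult_IZR -a_eq -b_eq -ka_eq -kb_eq; field; lra.
Qed.

Close Scope R_scope.

Theorem theorem2p3 (n : nat) (hn : (1 <= n)%N) (Oe Oo : {set z2tuple n}) :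
  Oe != set0 -> Oo != set0 ->
  (forall b, b \in Oe -> ~~ odd (hweight b)) ->
  (forall b, b \in Oo -> odd (hweight b)) ->
  (forall b, b \in Oe :|: Oo -> b != z2zero n) ->
  forall u v : vertex n, u <> v -> ~ pst (Oe :|: Oo) u v.
Proof.
move=> /set0Pn [be be_in] /set0Pn [bo bo_in] even_e odd_o Om_neq0 u v _.
move=> [t [c [s [t_gt0 [cos_c [sin_s cs_eq1]]]]]].
rewrite (uniqueness_sum _ _ _ cos_c (cos_term_sum _ _ _ _))
        (uniqueness_sum _ _ _ sin_s (sin_term_sum _ _ _ _)) in cs_eq1.
have locked := unimodular_sum_phases (Phi_weight_le1 u v) cs_eq1.
have phase_int b : b \in Oe :|: Oo -> is_int (t * (2 ^ n * sqrt 2 ^ hweight b) / PI).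
  by move=> b_in; apply: phase_lock_int b_in (Om_neq0 _ b_in) locked.
have /phase_int : be \in Oe :|: Oo by rewrite in_setU be_in.
rewrite sqrt2_pow (negbTE (even_e _ be_in)) Rmult_1_r => int_e.
have /phase_int : bo \in Oe :|: Oo by rewrite in_setU bo_in orbT.
rewrite sqrt2_pow (odd_o _ bo_in) -[(_ * (_ * sqrt 2))%R]Rmult_assoc => int_o.
have pow2_gt0 k : (0 < 2 ^ k)%R by apply: pow_lt; lra.
apply: (int_multiples_sqrt2 t_gt0 _ _ _ _ int_e int_o);
  by [apply: Rmult_lt_0_compat | apply: is_int_mul; apply: is_int_pow2].
Qed.
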